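(* For any $d_x,K\in\mathbb N$ and any $\gamma>0$, there exist a $\textsc{ReLU}$ network $f:\mathbb R^{d_x}\rightarrow\mathbb R$ of width $d_x+1$ and a set $\mathcal D_\gamma\subset[0,1]^{d_x}$ such that $f(x)=\mathtt{encode}_K(x)$ for all $x\in[0,1]^{d_x}\setminus\mathcal D_\gamma$, $\mu(\mathcal D_\gamma)<\gamma$, $f(\mathcal D_\gamma)\subset[0,1]$, and $f(\mathbb R^{d_x}\setminus[0,1]^{d_x})=\{1-2^{-d_xK}\}$, where $\mu$ denotes Lebesgue measure.
   Context: $\mathcal C_K:=\{0,2^{-K},2\cdot2^{-K},\dots,1-2^{-K}\}$, $q_K:[0,1]\to\mathcal C_K$, $q_K(t)=\max\{c\in\mathcal C_K:c\le t\}$. For $x\in[0,1]^{d_x}$, $\mathtt{encode}_K(x):=\sum_{i=1}^{d_x}q_K(x_i)\,2^{-(i-1)K}$. A $\textsc{ReLU}$ network is $t_L\circ\sigma_{L-1}\circ\cdots\circ\sigma_1\circ t_1$ with affine $t_\ell:\mathbb R^{d_{\ell-1}}\to\mathbb R^{d_\ell}$ and coordinatewise $\textsc{ReLU}$ $\sigma_\ell$; its width is $\max\{d_1,\dots,d_{L-1}\}$. *)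

From HB Require Import structures.
From mathcomp Require Import all_boot all_order all_algebra.
From mathcomp Require Import all_classical all_reals.
Set Implicit Arguments. Unset Strict Implicit. Unset Printing Implicit Defensive.
Import Order.TTheory GRing.Theory Num.Theory.
Local Open Scope ring_scope.
Local Open Scope classical_set_scope.

Section Defs.
Variable R : realType.

Definition relu_vec n (v : 'rV[R]_n) : 'rV[R]_n := map_mx (fun a => Num.max a 0) v.

(** A ReLU network  t_L o sigma_{L-1} o t_{L-1} o ... o sigma_1 o t_1
    from R^m to R^n, with affine maps t_l(x) = x *m W + b (row vectors).
    [NetLast W b] is the final affine map t_L; [NetCons W b N] is an affine
    layer t with output dimension k followed by ReLU and then the network N. *)
Inductive relu_net : nat -> nat -> Type :=
| NetLast : forall m n, 'M[R]_(m, n) -> 'rV[R]_n -> relu_net m n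
| NetCons : forall m k n, 'M[R]_(m, k) -> 'rV[R]_k -> relu_net k n -> relu_net m n.

Fixpoint net_eval m n (N : relu_net m n) : 'rV[R]_m -> 'rV[R]_n :=
  match N in relu_net m n return 'rV[R]_m -> 'rV[R]_n with
  | NetLast _ _ W b => fun x => x *m W + b
  | NetCons _ _ _ W b N' => fun x => net_eval N' (relu_vec (x *m W + b))
  end.

Fixpoint net_width m n (N : relu_net m n) : nat :=
  match N with
  | NetLast _ _ _ _ => 0%N
  | NetCons _ k _ _ _ N' => maxn k (net_width N')
  end.

Definition net_fun d (N : relu_net d 1) (x : 'rV[R]_d) : R := net_eval N x ord0 ord0.

(** q_K(t) = max { c in C_K : c <= t },  C_K = { i / 2^K : 0 <= i < 2^K }.
    (For t in [0,1] the set is nonempty, contains 0 and is nonnegative,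
    so the default value 0 of the big max is harmless.) *)
Definition qK (K : nat) (t : R) : R :=
  \big[Num.max/0]_(i < 2 ^ K | (i%:R / 2%:R ^+ K <= t)) (i%:R / 2%:R ^+ K).

(** encode_K(x) = sum_{i=1}^{d} q_K(x_i) 2^{-(i-1)K}  (0-indexed coordinates). *)
Definition encode (d K : nat) (x : 'rV[R]_d) : R :=
  \sum_(i < d) qK K (x ord0 i) * (2%:R ^- (i * K)).

Definition unit_cube (d : nat) : set 'rV[R]_d :=
  [set x | forall i, 0 <= x ord0 i <= 1].

Definition box_vol d (a b : 'rV[R]_d) : R :=
  \prod_(i < d) Num.max (b ord0 i - a ord0 i) 0.

Definition in_box d (a b : 'rV[R]_d) : set 'rV[R]_d :=
  [set x | forall i, a ord0 i <= x ord0 i <= b ord0 i].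

(** Lebesgue (outer) measure of A in R^d is < g: A is covered by countably
    many boxes whose total volume (the series sum) is < g, i.e. all partial
    sums are bounded by some c < g. *)
Definition lebesgue_lt d (A : set 'rV[R]_d) (g : R) : Prop :=
  exists (a b : nat -> 'rV[R]_d) (c : R),
    c < g /\
    A `<=` \bigcup_k in_box (a k) (b k) /\
    (forall n : nat, \sum_(k < n) box_vol (a k) (b k) <= c).

End Defs.

From HB Require Import structures.
From mathcomp Require Import all_boot all_order all_algebra.
From mathcomp Require Import all_classical all_reals.
From mathcomp Require Import lra zify.
Import Order.TTheory GRing.Theory Num.Theory.
Local Open Scope ring_scope.
Local Open Scope classical_set_scope.
Set Implicit Arguments. Unset Strict Implicit.

(* The network has one neuron per coordinate and a spare one. On a coordinate [t >= 0] and
   the spare neuron, a ReLU program of width 2 computes a piecewise linear surrogate of the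
   quantizer q_K: the line [u = (2^-K / eps) t] is flattened by [2^K] plateau maps
   [u |-> u - relu (u - a) + relu (u - a - l)], one per grid value [j 2^-K], so that the
   surrogate equals q_K except on slabs of width [2 eps] around the grid points, and a last
   ReLU term makes it exceed [2^(dK)] at 0 and beyond 1. Running this program on every
   coordinate of [relu x] and clamping with [min (1 - 2^-(dK)) (sum_i y_i 2^-(iK))] gives a
   network of width [d + 1] that equals encode_K off the slabs (as encode_K <= 1 - 2^-(dK)),
   takes values in [[0, 1]], and is constant outside the cube, where some coordinate of
   [relu x] is 0 or at least 1. The slabs have total volume [2 eps d (2^K + 1)] < gamma
   for small eps. *)

Section Relu.
Variable R : realType.
Implicit Types x y c : R.

Definition relu x := Num.max x 0.

Lemma relu_ge0 x : 0 <= relu x.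
Proof. by rewrite le_max lexx orbT. Qed.

Lemma ler_relu x : x <= relu x.
Proof. by rewrite le_max lexx. Qed.

Lemma ger0_relu x : 0 <= x -> relu x = x.
Proof. exact: max_l. Qed.

Lemma ler0_relu x : x <= 0 -> relu x = 0.
Proof. exact: max_r. Qed.

Lemma relu_cases x : (0 <= x /\ relu x = x) \/ (x <= 0 /\ relu x = 0).
Proof.
case: (leP 0 x) => [x0|/ltW x0]; [left | right]; split => //.
  exact: ger0_relu.
exact: ler0_relu.
Qed.

Lemma subr_relu_min c y : c - relu (c - y) = Num.min c y.
Proof.
case: (leP c y) => cy; first by rewrite ler0_relu ?subr0 ?min_l //; lra.
have yc : y <= c by exact: ltW.
by rewrite ger0_relu ?min_r //; lra.
Qed.

End Relu.

Section TwoChannels.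
Variable R : realType.
Implicit Types k m e f a l u s : R.

(* [w_su] is the weight from the spare channel [s] into the working channel [u]. *)
Record layer2 := Layer2 { w_uu : R; w_su : R; b_u : R; w_us : R; w_ss : R; b_s : R }.

Definition eval2 (L : layer2) (us : R * R) : R * R :=
  (relu (w_uu L * us.1 + w_su L * us.2 + b_u L),
   relu (w_us L * us.1 + w_ss L * us.2 + b_s L)).

Definition run2 (p : seq layer2) (us : R * R) : R * R :=
  foldl (fun us L => eval2 L us) us p.

Lemma run2_cat p q us : run2 (p ++ q) us = run2 q (run2 p us).
Proof. exact: foldl_cat. Qed.

Definition affine_relu_prog k m e f : seq layer2 :=
  [:: Layer2 1 0 0 e 0 f; Layer2 k m 0 0 0 0].

Lemma affine_relu_progE k m e f u s : 0 <= k -> 0 <= m -> 0 <= u ->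
  (run2 (affine_relu_prog k m e f) (u, s)).1 = k * u + m * relu (e * u + f).
Proof.
move=> k0 m0 u0; rewrite /= !mul0r !mul1r !addr0 (ger0_relu u0) ger0_relu //.
by apply: addr_ge0; apply: mulr_ge0; rewrite ?relu_ge0.
Qed.

Definition plateau a l u := u - relu (u - a) + relu (u - a - l).

Definition plateau_prog a l : seq layer2 :=
  [:: Layer2 1 0 0 1 0 (- a); Layer2 1 (-1) 0 1 0 (- a - l); Layer2 1 1 0 0 0 0].

Lemma plateau_progE a l u s : 0 <= a -> 0 <= u ->
  (run2 (plateau_prog a l) (u, s)).1 = plateau a l u.
Proof.
move=> a0 u0; rewrite /= !mul0r !mul1r !addr0 (ger0_relu u0) !mulN1r.
have u_sub : 0 <= u - relu (u - a) by case: (relu_cases (u - a)) => -[? ->]; lra.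
rewrite (ger0_relu u_sub) ger0_relu ?addrA //.
by apply: addr_ge0 => //; exact: relu_ge0.
Qed.

End TwoChannels.

Section Staircase.
Variables (R : realType) (h l : R).
Implicit Types a u s : R.

Lemma plateau_id a u : 0 <= l -> u <= a -> plateau a l u = u.
Proof. by move=> l0 ua; rewrite /plateau !ler0_relu; lra. Qed.

Lemma plateau_flat a u : a <= u <= a + l -> plateau a l u = a.
Proof. by case/andP=> au ual; rewrite /plateau ger0_relu ?ler0_relu; lra. Qed.

Lemma plateau_shift a u : 0 <= l -> a + l <= u -> plateau a l u = u - l.
Proof. by move=> l0 alu; rewrite /plateau !ger0_relu; lra. Qed.

Lemma plateau_ge0 a u : 0 <= a -> 0 <= u -> 0 <= plateau a l u.
Proof.
move=> a0 u0; rewrite /plateau; have := relu_ge0 (u - a - l).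
by case: (relu_cases (u - a)) => -[? ->]; lra.
Qed.

Fixpoint staircase m u :=
  if m is m'.+1 then plateau (m'%:R * h) l (staircase m' u) else u.

Fixpoint staircase_prog m : seq (layer2 R) :=
  if m is m'.+1 then staircase_prog m' ++ plateau_prog (m'%:R * h) l else [::].

Hypothesis h_ge0 : 0 <= h.

Lemma staircase_ge0 m u : 0 <= u -> 0 <= staircase m u.
Proof.
move=> u0; elim: m => //= m IH.
by apply: plateau_ge0 => //; apply: mulr_ge0.
Qed.

Lemma staircase_progE m u s : 0 <= u -> (run2 (staircase_prog m) (u, s)).1 = staircase m u.
Proof.
move=> u0; elim: m => //= m IH.
rewrite run2_cat [run2 _ (u, s)]surjective_pairing plateau_progE.
- by congr plateau.
- exact: mulr_ge0.
- by rewrite IH; exact: staircase_ge0.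
Qed.

Lemma staircase_tail m u : 0 <= l -> m%:R * (h + l) <= u -> staircase m u = u - m%:R * l.
Proof.
move=> l0; have h0 := h_ge0; elim: m => [|m IH] /=; first by rewrite !mul0r subr0.
have m0 := ler0n R m; rewrite -natr1 => hu.
by rewrite IH ?plateau_shift; nra.
Qed.

Lemma staircase_flat m j u : 0 <= l -> (j < m)%N ->
  j%:R * (h + l) <= u <= j%:R * (h + l) + l -> staircase m u = j%:R * h.
Proof.
move=> l0 jm /andP[u_lo u_hi]; elim: m jm => // m IH /=; rewrite ltnS leq_eqVlt.
case/orP=> [/eqP <- | jm].
  by rewrite staircase_tail // plateau_flat //; lra.
rewrite IH // plateau_id // ler_wpM2r // ler_nat; exact: ltnW.
Qed.

End Staircase.

Section Grid.
Variables (R : realType) (K : nat).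
Implicit Types t : R.

Definition mesh : R := (2%:R ^+ K)^-1.

Lemma mesh_gt0 : 0 < mesh.
Proof. by rewrite invr_gt0 exprn_gt0 ?ltr0n. Qed.

Lemma natr_mesh : (2 ^ K)%:R * mesh = 1.
Proof. by rewrite natrX divff // expf_neq0 // pnatr_eq0. Qed.

Lemma grid_le1 j : (j < 2 ^ K)%N -> j.+1%:R * mesh <= 1.
Proof.
move=> jK; rewrite -[leRHS]natr_mesh ler_wpM2r ?ler_nat //; exact: ltW mesh_gt0.
Qed.

Lemma qK_grid j t : (j < 2 ^ K)%N -> j%:R * mesh <= t < j.+1%:R * mesh ->
  qK K t = j%:R * mesh.
Proof.
move=> jK /andP[t_lo t_hi]; have h0 := mesh_gt0.
apply/eqP; rewrite eq_le; apply/andP; split.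
  apply: bigmax_le => [|i it]; first by rewrite mulr_ge0 ?ler0n ?ltW.
  change (i%:R * mesh <= j%:R * mesh); rewrite ler_pM2r // ler_nat -ltnS -(ltr_nat R).
  by rewrite -(ltr_pM2r h0); exact: le_lt_trans it t_hi.
exact: (@le_bigmax_cond _ _ _ 0 (Ordinal jK) _ (fun i : 'I_(2 ^ K) => i%:R / 2%:R ^+ K : R) t_lo).
Qed.

Lemma qK_le t : qK K t <= 1 - mesh.
Proof.
apply: bigmax_le => [|i _]; first by have := grid_le1 (expn_gt0 2 K); rewrite mulr1n mul1r; lra.
change (i%:R * mesh <= 1 - mesh).
by have := grid_le1 (ltn_ord i); rewrite -natr1; lra.
Qed.

Lemma sum_geometric_mesh d :
  \sum_(i < d) (1 - mesh) * 2%:R ^- (i * K) = 1 - 2%:R ^- (d * K).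
Proof.
elim: d => [|d IH]; first by rewrite big_ord0 mul0n expr0 invr1 subrr.
by rewrite big_ord_recr /= IH mulSn exprD invfM /mesh; lra.
Qed.

Lemma encode_le d (x : 'rV[R]_d) : encode K x <= 1 - 2%:R ^- (d * K).
Proof.
rewrite -sum_geometric_mesh; apply: ler_sum => i _.
by rewrite ler_wpM2r ?qK_le // invr_ge0 exprn_ge0 ?ler0n.
Qed.

Lemma exp2_inv_itv n : 0 <= 1 - (2%:R : R) ^- n <= 1.
Proof.
have p1 : 1 <= 2%:R ^+ n :> R by rewrite exprn_ege1 ?ler1n.
have i1 : (2%:R ^+ n)^-1 <= 1 :> R by rewrite invf_le1 //; lra.
by apply/andP; split; [lra | rewrite lerBlDr lerDl invr_ge0; lra].
Qed.

Lemma exp2_ratio_ge1 i d : (i <= d)%N -> 1 <= 2%:R ^+ (d * K) * 2%:R ^- (i * K) :> R.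
Proof.
move=> id; rewrite ler_pdivlMr ?exprn_gt0 ?ltr0n // mul1r ler_weXn2l ?ler1n //.
by rewrite leq_mul2r id orbT.
Qed.

End Grid.

Lemma sum_ge_off_cube (R : realType) d (G : R -> R) (w : nat -> R) (B c : R) (x : 'rV[R]_d) :
  (forall t, 0 <= t -> 0 <= G t) -> (forall t, 0 <= t -> t = 0 \/ 1 <= t -> B <= G t) ->
  (forall i : 'I_d, 0 <= w i /\ c <= B * w i) -> ~ unit_cube x ->
  c <= \sum_(i < d) G (relu (x 0 i)) * w i.
Proof.
move=> G0 GB w_ok /existsNP[i xi]; have [wi0 cB] := w_ok i.
have far : relu (x 0 i) = 0 \/ 1 <= relu (x 0 i).
  case: (relu_cases (x 0 i)) => -[xi0 ->]; [right | by left].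
  by rewrite leNgt; apply/negP => xi1; apply: xi; rewrite xi0 ltW.
have term : c <= G (relu (x 0 i)) * w i.
  by apply: (le_trans cB); rewrite ler_wpM2r // GB // relu_ge0.
apply: (le_trans term); rewrite (bigD1 i) //= lerDl.
by apply: sumr_ge0 => k _; rewrite mulr_ge0 ?G0 ?relu_ge0 ?(w_ok k).1.
Qed.

Section Quantizer.
Variables (R : realType) (K : nat) (eps M : R).
Implicit Types t : R.
Local Notation mesh := (mesh R K).

Definition qslope := mesh / eps.

(* The [relu (eps - t)] term moves [t = 0] up to the value at [t = 1]. *)
Definition qlift t := qslope * t + qslope / eps * relu (eps - t).

Definition qapprox t :=
  let u := staircase mesh (qslope * (mesh - eps)) (2 ^ K) (qlift t) in
  u + M * relu (u - (1 - mesh)).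

Definition qprog : seq (layer2 R) :=
  affine_relu_prog qslope (qslope / eps) (-1) eps ++
  staircase_prog mesh (qslope * (mesh - eps)) (2 ^ K) ++
  affine_relu_prog 1 M 1 (mesh - 1).

Definition off_grid t :=
  eps <= t /\ exists2 j, (j < 2 ^ K)%N & j%:R * mesh <= t <= j.+1%:R * mesh - eps.

Hypothesis eps_gt0 : 0 < eps.

Lemma qslope_gt0 : 0 < qslope.
Proof. by rewrite divr_gt0 ?(mesh_gt0 R K). Qed.

Lemma qslope_eps : qslope * eps = mesh.
Proof. by rewrite divfK // gt_eqF. Qed.

Lemma qslope_div_ge0 : 0 <= qslope / eps.
Proof. by rewrite divr_ge0 // ltW // qslope_gt0. Qed.

Lemma qslope_step : mesh + qslope * (mesh - eps) = qslope * mesh.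
Proof. by rewrite mulrBr qslope_eps addrC subrK. Qed.

Lemma qlift_ge0 t : 0 <= t -> 0 <= qlift t.
Proof.
have k0 := qslope_gt0; have ke0 := qslope_div_ge0.
by move=> t0; apply: addr_ge0; apply: mulr_ge0; rewrite ?relu_ge0 // ltW.
Qed.

Lemma qprogE : 0 <= M -> forall t s, 0 <= t -> (run2 qprog (t, s)).1 = qapprox t.
Proof.
move=> M0 t s t0; have k0 := ltW qslope_gt0; have h0 := ltW (mesh_gt0 R K).
have ke0 := qslope_div_ge0.
rewrite !run2_cat [run2 _ (t, s)]surjective_pairing affine_relu_progE //.
rewrite mulN1r [- t + eps]addrC -/(qlift t) [run2 _ (qlift t, _)]surjective_pairing.
rewrite staircase_progE ?qlift_ge0 // [run2 _ (staircase _ _ _ _, _)]surjective_pairing.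
by rewrite affine_relu_progE ?mul1r ?staircase_ge0 ?qlift_ge0 // /qapprox /= opprB.
Qed.

Lemma qapprox_ge0 t : 0 <= M -> 0 <= t -> 0 <= qapprox t.
Proof.
move=> M0 t0; rewrite /qapprox /=.
have u0 : 0 <= staircase mesh (qslope * (mesh - eps)) (2 ^ K) (qlift t).
  by apply: staircase_ge0; [exact: ltW (mesh_gt0 R K) | exact: qlift_ge0].
by rewrite addr_ge0 ?mulr_ge0 ?relu_ge0.
Qed.

Lemma qapprox_grid j t : (j < 2 ^ K)%N -> eps <= t ->
  j%:R * mesh <= t <= j.+1%:R * mesh - eps -> qapprox t = j%:R * mesh.
Proof.
move=> jK et /andP[t_lo t_hi]; have k0 := qslope_gt0; have ke := qslope_eps.
have j0 := ler0n R j; have jle := grid_le1 R jK.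
rewrite /qapprox /qlift ler0_relu ?mulr0 ?addr0; last lra.
rewrite (@staircase_flat _ _ _ (ltW (mesh_gt0 R K)) _ j).
- by rewrite ler0_relu ?mulr0 ?addr0 //; lra.
- by apply: mulr_ge0; lra.
- by [].
- rewrite -natr1 in t_hi *; apply/andP; split; nra.
Qed.

Lemma qapprox_far t : eps < mesh -> 0 <= M -> 0 <= t -> t = 0 \/ 1 <= t ->
  M * mesh <= qapprox t.
Proof.
move=> eh M0 t0 ht; have k0 := qslope_gt0; have ke := qslope_eps.
have n1 := natr_mesh R K; set n := (2 ^ K)%:R in n1 *.
have lift_ge : qslope <= qlift t.
  rewrite /qlift; have := relu_ge0 (eps - t); have := qslope_div_ge0.
  case: ht => [-> | t1] a b; last by nra.
  by rewrite mulr0 add0r subr0 ger0_relu ?divfK ?gt_eqF //; exact: ltW.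
have nl : n * (qslope * (mesh - eps)) = qslope - 1.
  by rewrite mulrBr ke mulrBr mulrCA n1 mulr1.
have l0 : 0 <= qslope * (mesh - eps) by apply: mulr_ge0; lra.
have tail : n * (mesh + qslope * (mesh - eps)) <= qlift t.
  by rewrite qslope_step mulrCA n1 mulr1.
rewrite /qapprox /= (staircase_tail (ltW (mesh_gt0 R K)) l0 tail) nl.
set u := _ - _; have u1 : 1 <= u by rewrite /u; lra.
by have := ler_relu (u - (1 - mesh)); nra.
Qed.

Lemma qapprox_qK t : off_grid t -> qapprox t = qK K t.
Proof.
case=> et [j jK /andP[t_lo t_hi]]; have e0 := eps_gt0.
rewrite (qapprox_grid jK et) ?t_lo ?t_hi // (qK_grid jK) // t_lo /=; lra.
Qed.

Lemma near_grid t : 0 <= t <= 1 -> ~ off_grid t ->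
  exists2 j, (j <= 2 ^ K)%N & j%:R * mesh - eps <= t <= j%:R * mesh + eps.
Proof.
move=> /andP[t0 t1] t_near; have e0 := eps_gt0; have h0 := mesh_gt0 R K;
have n1 := natr_mesh R K.
case: (ltP t eps) => [te | et]; first by exists 0%N; rewrite // mul0r; apply/andP; lra.
case: (ltP t 1) => [t_lt1 | t_ge1]; last by exists (2 ^ K)%N; rewrite // n1; apply/andP; lra.
pose j := Num.truncn (t / mesh).
have /andP[j_lo j_hi] : j%:R * mesh <= t < j.+1%:R * mesh.
  by rewrite -!ler_pdivlMr -?ltr_pdivrMr // truncn_itv // divr_ge0 // ltW.
have jK : (j < 2 ^ K)%N by rewrite -(ltr_nat R) -(ltr_pM2r h0) n1; lra.
exists j.+1 => //; apply/andP; split; last lra.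
rewrite leNgt; apply/negP => t_lo; apply: t_near; split => //.
by exists j => //; apply/andP; split; lra.
Qed.

Definition qsum d (x : 'rV[R]_d) := \sum_(i < d) qapprox (relu (x 0 i)) * 2%:R ^- (i * K).

Lemma qsum_ge0 d (x : 'rV[R]_d) : 0 <= M -> 0 <= qsum x.
Proof.
move=> M0; apply: sumr_ge0 => i _.
by rewrite mulr_ge0 ?qapprox_ge0 ?relu_ge0 // invr_ge0 exprn_ge0.
Qed.

Lemma qsum_encode d (x : 'rV[R]_d) : unit_cube x -> (forall i, off_grid (x 0 i)) ->
  qsum x = encode K x.
Proof.
move=> x_cube x_off; apply: eq_bigr => i _.
by rewrite ger0_relu ?qapprox_qK //; case/andP: (x_cube i).
Qed.

Lemma qsum_off_cube d (x : 'rV[R]_d) : eps < mesh -> 0 <= M ->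
  2%:R ^+ (d * K) <= M * mesh -> ~ unit_cube x -> 1 - 2%:R ^- (d * K) <= qsum x.
Proof.
move=> eh M0 M_big x_out.
apply: (sum_ge_off_cube (G := qapprox) (w := fun i => 2%:R ^- (i * K)) (B := M * mesh) _ _ _ x_out).
- by move=> t t0; exact: qapprox_ge0.
- by move=> t t0; exact: qapprox_far.
move=> i; rewrite invr_ge0 exprn_ge0 ?ler0n //; split=> //.
have := exp2_ratio_ge1 R K (ltnW (ltn_ord i)); have := exp2_inv_itv R (d * K).
have : 0 <= 2%:R ^- (i * K) :> R by rewrite invr_ge0 exprn_ge0 ?ler0n.
by nra.
Qed.

End Quantizer.

Section Sums.
Variables (R : realType) (I : finType).

Lemma sum_mul_eq (F : I -> R) j : \sum_k F k * (k == j)%:R = F j.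
Proof.
by rewrite (bigD1 j) //= eqxx mulr1 big1 ?addr0 // => k /negbTE ->; rewrite mulr0.
Qed.

Lemma sum_mul_if2 (F : I -> R) p q a b : p != q ->
  \sum_k F k * (if k == p then a else if k == q then b else 0) = F p * a + F q * b.
Proof.
move=> pq; rewrite (bigD1 p) //= eqxx (bigD1 q) 1?eq_sym //= (negbTE pq) eqxx.
by rewrite big1 ?addr0 // => k /andP[/negbTE -> /negbTE ->]; rewrite mulr0.
Qed.

End Sums.

Section Lift.
Variables (R : realType) (d : nat).
Implicit Type v : 'rV[R]_d.+1.

Definition chan (i : 'I_d) : 'I_d.+1 := widen_ord (leqnSn d) i.
Definition spare : 'I_d.+1 := ord_max.

Lemma chan_spareF i : (chan i == spare) = false.
Proof. by rewrite -val_eqE /= ltn_eqF. Qed.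

Lemma chan_eq i j : (chan i == chan j) = (i == j).
Proof. by rewrite -!val_eqE. Qed.

Definition layer := ('M[R]_d.+1 * 'rV[R]_d.+1)%type.

Definition eval_layer (L : layer) v := relu_vec (v *m L.1 + L.2).

Definition run_layers (p : seq layer) v := foldl (fun v L => eval_layer L v) v p.

Lemma run_layers_cat p q v : run_layers (p ++ q) v = run_layers q (run_layers p v).
Proof. exact: foldl_cat. Qed.

Lemma run_layers_ge0 p v : (forall l, 0 <= v 0 l) -> forall l, 0 <= run_layers p v 0 l.
Proof.
elim: p v => //= L p IH v _; apply: IH => l.
by rewrite mxE; exact: relu_ge0.
Qed.

Definition lift_layer (i : 'I_d) (L : layer2 R) : layer :=
  (\matrix_(k, l) if l == chan i then
                    if k == chan i then w_uu L else if k == spare then w_su L else 0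
                  else if l == spare then
                    if k == chan i then w_us L else if k == spare then w_ss L else 0
                  else (k == l)%:R,
   \row_l if l == chan i then b_u L else if l == spare then b_s L else 0).

Lemma eval_lift_layerE i L v l : eval_layer (lift_layer i L) v 0 l =
  if l == chan i then relu (w_uu L * v 0 (chan i) + w_su L * v 0 spare + b_u L)
  else if l == spare then relu (w_us L * v 0 (chan i) + w_ss L * v 0 spare + b_s L)
  else relu (v 0 l).
Proof.
have cs : chan i != spare by rewrite chan_spareF.
rewrite !mxE; under eq_bigr => k _ do rewrite mxE.
case: ifP => [_ | li]; last case: ifP => [_ | ls].
- by rewrite sum_mul_if2 // [v 0 (chan i) * _]mulrC [v 0 spare * _]mulrC.
- by rewrite sum_mul_if2 // [v 0 (chan i) * _]mulrC [v 0 spare * _]mulrC.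
- by rewrite sum_mul_eq addr0.
Qed.

Lemma run_lift_prog i p v : (forall l, l != chan i -> l != spare -> 0 <= v 0 l) ->
  let w := run_layers (map (lift_layer i) p) v in
  (w 0 (chan i), w 0 spare) = run2 p (v 0 (chan i), v 0 spare) /\
  (forall l, l != chan i -> l != spare -> w 0 l = v 0 l).
Proof.
elim: p v => [|L p IH] v v0 //=.
set v1 := eval_layer _ v.
have v1E l : l != chan i -> l != spare -> v1 0 l = v 0 l.
  by move=> li ls; rewrite eval_lift_layerE (negbTE li) (negbTE ls) ger0_relu // v0.
have v1_ge0 l : l != chan i -> l != spare -> 0 <= v1 0 l by move=> li ls; rewrite v1E ?v0.
have [-> w_other] := IH v1 v1_ge0.
split; last by move=> l li ls; rewrite w_other // v1E.
by rewrite !eval_lift_layerE eqxx eq_sym chan_spareF eqxx.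
Qed.

Definition coordwise_prog (r : seq 'I_d) (p : seq (layer2 R)) : seq layer :=
  flatten [seq map (lift_layer i) p | i <- r].

Lemma coordwise_progE (G : R -> R) (p : seq (layer2 R)) r v :
  (forall t s, 0 <= t -> (run2 p (t, s)).1 = G t) -> uniq r -> (forall l, 0 <= v 0 l) ->
  forall i, run_layers (coordwise_prog r p) v 0 (chan i) =
            if i \in r then G (v 0 (chan i)) else v 0 (chan i).
Proof.
move=> pG; elim: r v => [|j r IH] v //= /andP[jr ur] v0 i.
rewrite run_layers_cat; set v1 := run_layers _ v.
have [v1j v1_other] := @run_lift_prog j p v (fun l _ _ => v0 l).
rewrite IH //; last exact: run_layers_ge0.
rewrite in_cons; case: (eqVneq i j) => [-> | ij] /=.
  by rewrite (negbTE jr) -/v1; move: (congr1 fst v1j) => /= ->; rewrite pG.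
by rewrite v1_other ?chan_eq ?chan_spareF.
Qed.

End Lift.

Section Network.
Variables (R : realType) (d : nat).

Fixpoint prepend_layers n (p : seq (layer R d)) (N : relu_net R d.+1 n) : relu_net R d.+1 n :=
  if p is L :: p' then NetCons L.1 L.2 (prepend_layers p' N) else N.

Lemma net_eval_prepend n p (N : relu_net R d.+1 n) v :
  net_eval (prepend_layers p N) v = net_eval N (run_layers p v).
Proof. by elim: p v => //= L p IH v; rewrite IH. Qed.

Lemma net_width_prepend n p (N : relu_net R d.+1 n) :
  (net_width N <= d.+1)%N -> (net_width (prepend_layers p N) <= d.+1)%N.
Proof. by move=> NW; elim: p => //= L p IH; rewrite geq_max leqnn. Qed.

Definition clamp_net (w : nat -> R) (c : R) : relu_net R d.+1 1 :=
  NetCons (\matrix_(l < d.+1, _ < 1) - (if (l < d)%N then w l else 0)) (const_mx c)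
    (NetLast (const_mx (-1)) (const_mx c)).

Lemma clamp_netE w c v :
  net_eval (clamp_net w c) v 0 0 = Num.min c (\sum_(i < d) v 0 (chan i) * w i).
Proof.
rewrite -subr_relu_min /= !mxE big_ord1 !mxE big_ord_recr /= !mxE.
rewrite [(_ < d)%N]ltnn oppr0 mulr0 addr0.
under eq_bigr => i _ do rewrite mxE /= ltn_ord mulrN.
by rewrite sumrN mulrN1 addrC [- _ + c]addrC.
Qed.

Definition embed : 'M[R]_(d, d.+1) := \matrix_(k, l) (chan k == l)%:R.

Definition coord_net (p : seq (layer2 R)) (w : nat -> R) (c : R) : relu_net R d 1 :=
  NetCons embed 0 (prepend_layers (coordwise_prog (enum 'I_d) p) (clamp_net w c)).

Lemma coord_net_width p w c : net_width (coord_net p w c) = d.+1.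
Proof. by apply/maxn_idPl/net_width_prepend. Qed.

Lemma coord_netE (G : R -> R) p w c x :
  (forall t s, 0 <= t -> (run2 p (t, s)).1 = G t) ->
  net_fun (coord_net p w c) x = Num.min c (\sum_(i < d) G (relu (x 0 i)) * w i).
Proof.
move=> pG; rewrite /net_fun /= net_eval_prepend clamp_netE.
set v := relu_vec _.
have v0 l : 0 <= v 0 l by rewrite mxE; exact: relu_ge0.
congr (Num.min c _); apply: eq_bigr => i _.
rewrite (coordwise_progE pG (enum_uniq 'I_d) v0) mem_enum !mxE addr0.
under eq_bigr => k _ do rewrite mxE chan_eq.
by rewrite sum_mul_eq.
Qed.

End Network.

Section Cover.
Variables (R : realType) (d : nat).
Hypothesis d_gt0 : (0 < d)%N.

Lemma box_vol_empty : box_vol (const_mx 1 : 'rV[R]_d) (const_mx 0) = 0.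
Proof.
rewrite /box_vol; under eq_bigr => i _ do rewrite !mxE sub0r max_r ?lerN10 //.
by rewrite prodr_const card_ord expr0n gtn_eqF.
Qed.

Lemma box_vol_slab (i : nat) (lo hi : R) : (i < d)%N -> lo <= hi ->
  box_vol (\row_l (if (l : nat) == i then lo else 0) : 'rV[R]_d)
          (\row_l (if (l : nat) == i then hi else 1)) = hi - lo.
Proof.
move=> id lohi; rewrite /box_vol (bigD1 (Ordinal id)) //= !mxE eqxx max_l ?subr_ge0 //.
rewrite big1 ?mulr1 // => l /negbTE li; rewrite !mxE.
by rewrite -val_eqE /= in li; rewrite li subr0 max_l.
Qed.

Lemma lebesgue_lt_cover (A : set 'rV[R]_d) (a b : nat -> 'rV[R]_d) N v g :
  0 <= v -> (forall k, (k < N)%N -> box_vol (a k) (b k) <= v) ->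
  A `<=` [set x | exists2 k, (k < N)%N & in_box (a k) (b k) x] ->
  N%:R * v < g -> lebesgue_lt A g.
Proof.
move=> v0 vol_le cover Nv.
(* Beyond [N] the cover is padded with empty boxes, of volume 0 only because [0 < d]. *)
pose a' k := if (k < N)%N then a k else const_mx 1.
pose b' k := if (k < N)%N then b k else const_mx 0.
have vol'_le k : box_vol (a' k) (b' k) <= (k < N)%N%:R * v.
  by rewrite /a' /b'; case: ifP => kN; rewrite ?mul1r ?vol_le ?box_vol_empty ?mul0r.
exists a', b', (N%:R * v); split => //; split.
  move=> x /cover[k kN xk]; exists k => //.
  by rewrite /a' /b' kN.
move=> m; apply: (@le_trans _ _ ((minn m N)%:R * v)); last first.
  by rewrite ler_wpM2r // ler_nat geq_minr.
elim: m => [|m IH]; first by rewrite big_ord0 min0n mul0r.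
rewrite big_ord_recr /=; apply: (le_trans (lerD IH (vol'_le m))).
rewrite -mulrDl -natrD ler_wpM2r // ler_nat; case: (ltnP m N) => mN; lia.
Qed.

End Cover.

Lemma off_grid_cover (R : realType) (d K : nat) (eps g : R) : (0 < d)%N -> 0 < eps ->
  (d * (2 ^ K).+1)%:R * 2 * eps < g ->
  lebesgue_lt [set x : 'rV[R]_d | unit_cube x /\ ~ (forall i, off_grid K eps (x 0 i))] g.
Proof.
move=> d_gt0 e0 small; pose N1 := (2 ^ K).+1.
pose c k : R := (k %% N1)%N%:R * mesh R K.
pose a k : 'rV[R]_d := \row_l (if (l : nat) == (k %/ N1)%N then c k - eps else 0).
pose b k : 'rV[R]_d := \row_l (if (l : nat) == (k %/ N1)%N then c k + eps else 1).
apply: (@lebesgue_lt_cover _ _ d_gt0 _ a b (d * N1) (2 * eps)); last by rewrite mulrA.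
- by rewrite mulr_ge0 // ltW.
- move=> k kN; rewrite box_vol_slab ?ltn_divLR //; lra.
move=> x [x_cube /existsNP[i /(near_grid e0 (x_cube i))[j jK xj]]].
have jN : (j < N1)%N by rewrite ltnS.
exists (i * N1 + j)%N.
  have : (i.+1 * N1 <= d * N1)%N by rewrite leq_mul2r ltn_ord orbT.
  by rewrite mulSnr; lia.
move=> l; rewrite !mxE /c divnMDl // modnMDl divn_small // modn_small // addn0.
by case: eqP => [/val_inj -> | _]; [exact: xj | exact: x_cube].
Qed.

Lemma exists_small_pos (R : realType) (a g C : R) : 0 < a -> 0 < g -> 0 <= C ->
  exists2 eps, 0 < eps < a & C * eps < g.
Proof.
move=> a0 g0 C0; exists (Num.min (a / 2) (g / (C + 1))).
  by rewrite lt_min !divr_gt0 //= ?gt_min ?ltr_pdivrMr; lra.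
have C1 : 0 < C + 1 by lra.
rewrite (@le_lt_trans _ _ (C * (g / (C + 1)))) ?ler_wpM2l ?ge_min ?lexx ?orbT //.
by rewrite mulrA ltr_pdivrMr //; nra.
Qed.

Unset Implicit Arguments.

Theorem lemma7 (R : realType) (dx K : nat) (gamma : R) :
  (0 < dx)%N -> (0 < K)%N -> 0 < gamma ->
  exists (N : relu_net R dx 1) (D : set 'rV[R]_dx),
    [/\ net_width N = dx.+1,
        D `<=` (@unit_cube R dx),
        (forall x, (@unit_cube R dx) x -> ~ D x -> net_fun N x = encode K x),
        lebesgue_lt D gamma
      & (net_fun N @` D `<=` [set t | 0 <= t <= 1] /\
         net_fun N @` (~` (@unit_cube R dx)) = [set 1 - 2%:R ^- (dx * K)])].
Proof.
move=> dx_gt0 _ gamma_gt0; have h0 := mesh_gt0 R K.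
have [eps /andP[e0 e_lt] small] := exists_small_pos h0 gamma_gt0
  (mulr_ge0 (ler0n R (dx * (2 ^ K).+1)) (ler0n R 2)).
pose M := 2%:R ^+ (dx * K) / mesh R K; pose c : R := 1 - 2%:R ^- (dx * K).
have M0 : 0 <= M by rewrite divr_ge0 ?exprn_ge0 ?ler0n // ltW.
have M_big : 2%:R ^+ (dx * K) <= M * mesh R K by rewrite divfK ?gt_eqF.
have /andP[c0 c1] : 0 <= c <= 1 := exp2_inv_itv R (dx * K).
pose N := coord_net dx (qprog K eps M) (fun i => 2%:R ^- (i * K)) c.
have NE x : net_fun N x = Num.min c (qsum K eps M x) := coord_netE _ _ x (qprogE K e0 M0).
have N_off x : ~ unit_cube x -> net_fun N x = c.
  by move=> x_out; rewrite NE min_l // qsum_off_cube.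
exists N, [set x | unit_cube x /\ ~ (forall i, off_grid K eps (x 0 i))].
split=> [||x x_cube x_on||]; first exact: coord_net_width.
- by move=> x [].
- rewrite NE qsum_encode ?min_r ?encode_le //.
  by apply: contrapT => x_near; apply: x_on.
- exact: off_grid_cover.
split=> [_ [x _ <-] | ]; first by rewrite NE /= le_min ge_min c0 c1 qsum_ge0.
apply/seteqP; split=> [_ [x x_out <-] | _ ->]; first by rewrite /= N_off.
have two_out : ~ unit_cube (const_mx 2%:R : 'rV[R]_dx).
  by move/(_ (Ordinal dx_gt0)); rewrite mxE; lra.
by exists (const_mx 2%:R); rewrite ?N_off.
Qed.
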